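(* Assume the setting of the context (two temperatures). For every $\gamma\in\mathcal{P}(S^2)$, $I_1(\gamma)=I^\infty(\gamma)$.
   Context: **Dynamics.** $S$ is a finite set. For $k=1,2$, $\Gamma^k$ is an irreducible intensity matrix on $S$, reversible with respect to its unique invariant distribution $\mu_k$. Set $q_k(x)=\sum_{y\ne x}\Gamma^k_{x,y}$ and $\mu=\mu_1\times\mu_2$ on $S^2$. **Weights and infinite swapping rates.** - $\rho(x_1,x_2)=\mu(x_1,x_2)/(\mu(x_1,x_2)+\mu(x_2,x_1))$. - The infinite swapping rates are $\Gamma^\infty_{(x_1,x_2),(y_1,x_2)}=\rho(x_1,x_2)\Gamma^1_{x_1,y_1}+\rho(x_2,x_1)\Gamma^2_{x_1,y_1}$ for $y_1\ne x_1$. - They are $\Gamma^\infty_{(x_1,x_2),(x_1,y_2)}=\rho(x_1,x_2)\Gamma^2_{x_2,y_2}+\rho(x_2,x_1)\Gamma^1_{x_2,y_2}$ for $y_2\ne x_2$. - All other off-diagonal rates are $0$. - $q^\infty(\mathbf{x})=\sum_{\mathbf{y}\ne\mathbf{x}}\Gamma^\infty_{\mathbf{x},\mathbf{y}}$. - $\bar\mu(x_1,x_2)=\frac12[\mu(x_1,x_2)+\mu(x_2,x_1)]$. **Map and rate functions.** - $(M\nu)(x_1,x_2)=\rho(x_1,x_2)[\nu(x_1,x_2)+\nu(x_2,x_1)]$. - For $\nu\in\mathcal{P}(S^2)$ with $\theta=\nu/\bar\mu$, $J(\nu)=\sum_{\mathbf{x}}q^\infty(\mathbf{x})\theta(\mathbf{x})\bar\mu(\mathbf{x})-\sum_{\mathbf{x}\ne\mathbf{y}}\theta^{1/2}(\mathbf{x})\theta^{1/2}(\mathbf{y})\Gamma^\infty_{\mathbf{x},\mathbf{y}}\bar\mu(\mathbf{x})$.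 - $I_1(\gamma)=\inf\{J(\nu):\nu\in\mathcal{P}(S^2),\ M\nu=\gamma\}$, with $\inf\emptyset=+\infty$. **Uncoupled generator.** $\Gamma$ is the rate matrix of the uncoupled process on $S^2$: $\Gamma_{(x_1,x_2),(y_1,x_2)}=\Gamma^1_{x_1,y_1}$ for $y_1\ne x_1$, and $\Gamma_{(x_1,x_2),(x_1,y_2)}=\Gamma^2_{x_2,y_2}$ for $y_2\ne x_2$. All other off-diagonal entries are $0$, and $q(x_1,x_2)=q_1(x_1)+q_2(x_2)$. **Definition of $I^\infty$.** For $\gamma\in\mathcal{P}(S^2)$ with $f=\gamma/\mu$ satisfying $f(x_1,x_2)=f(x_2,x_1)$ for all $(x_1,x_2)$, set \[ I^\infty(\gamma)=\sum_{\mathbf{x}}q(\mathbf{x})\gamma(\mathbf{x})-\sum_{\mathbf{x}\ne\mathbf{y}}f^{1/2}(\mathbf{x})f^{1/2}(\mathbf{y})\Gamma_{\mathbf{x},\mathbf{y}}\mu(\mathbf{x}). \] Otherwise set $I^\infty(\gamma)=+\infty$. *)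

From HB Require Import structures.
From mathcomp Require Import all_boot all_order all_algebra.
From mathcomp Require Import all_classical all_reals ereal.
Set Implicit Arguments. Unset Strict Implicit. Unset Printing Implicit Defensive.
Import Order.TTheory GRing.Theory Num.Theory.
Local Open Scope ring_scope.
Local Open Scope classical_set_scope.

Section Defs.
Variables (R : realType) (S : finType).

Definition is_prob (T : finType) (p : T -> R) : Prop :=
  (forall x, 0 <= p x) /\ \sum_(x : T) p x = 1.

Definition is_intensity (G : S -> S -> R) : Prop :=
  (forall x y, x != y -> 0 <= G x y) /\ (forall x, \sum_(y : S) G x y = 0).

Definition irreducible (G : S -> S -> R) : Prop :=
  forall x y, connect [rel a b | (a != b) && (0 < G a b)] x y.

Definition is_invariant (G : S -> S -> R) (mu : S -> R) : Prop :=
  is_prob mu /\ forall y, \sum_(x : S) mu x * G x y = 0.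

Definition reversible (G : S -> S -> R) (mu : S -> R) : Prop :=
  forall x y, mu x * G x y = mu y * G y x.

Definition qrate (G : S -> S -> R) (x : S) : R := \sum_(y : S | y != x) G x y.

Variables (G1 G2 : S -> S -> R) (mu1 mu2 : S -> R).

Definition swap (x : S * S) : S * S := (x.2, x.1).

Definition mu (x : S * S) : R := mu1 x.1 * mu2 x.2.

Definition rho (x : S * S) : R := mu x / (mu x + mu (swap x)).

Definition mubar (x : S * S) : R := (mu x + mu (swap x)) / 2.

Definition Ginf (x y : S * S) : R :=
  if (x.2 == y.2) && (x.1 != y.1) then
    rho x * G1 x.1 y.1 + rho (swap x) * G2 x.1 y.1
  else if (x.1 == y.1) && (x.2 != y.2) then
    rho x * G2 x.2 y.2 + rho (swap x) * G1 x.2 y.2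
  else 0.

Definition qinf (x : S * S) : R := \sum_(y : S * S | y != x) Ginf x y.

Definition Gunc (x y : S * S) : R :=
  if (x.2 == y.2) && (x.1 != y.1) then G1 x.1 y.1
  else if (x.1 == y.1) && (x.2 != y.2) then G2 x.2 y.2
  else 0.

Definition qunc (x : S * S) : R := qrate G1 x.1 + qrate G2 x.2.

Definition Mmap (nu : S * S -> R) (x : S * S) : R := rho x * (nu x + nu (swap x)).

Definition Jfun (nu : S * S -> R) : R :=
  let theta := fun x => nu x / mubar x in
  \sum_(x : S * S) qinf x * theta x * mubar x
  - \sum_(x : S * S) \sum_(y : S * S | y != x)
      Num.sqrt (theta x) * Num.sqrt (theta y) * Ginf x y * mubar x.

(* I_1(gamma) = inf { J nu : nu in P(S^2), M nu = gamma }, inf of empty = +oo *)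
Definition I1 (gamma : S * S -> R) : \bar R :=
  ereal_inf [set (Jfun nu)%:E | nu in
               [set nu | is_prob nu /\ forall x, Mmap nu x = gamma x]].

Definition Iinf (gamma : S * S -> R) : \bar R :=
  let f := fun x => gamma x / mu x in
  if [forall x : S * S, f x == f (swap x)] then
    (\sum_(x : S * S) qunc x * gamma x
     - \sum_(x : S * S) \sum_(y : S * S | y != x)
         Num.sqrt (f x) * Num.sqrt (f y) * Gunc x y * mu x)%:E
  else +oo%E.

End Defs.

From HB Require Import structures.
From mathcomp Require Import all_boot all_order all_algebra.
From mathcomp Require Import all_classical all_reals ereal.
From mathcomp Require Import ring lra.
Set Implicit Arguments. Unset Strict Implicit. Unset Printing Implicit Defensive.
Import Order.TTheory GRing.Theory Num.Theory.
Local Open Scope ring_scope.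

(* Both rate functions are values of the Dirichlet-type form
     E(c, t) = sum_(x <> y) c x y * (t x - sqrt (t x) * sqrt (t y)):
   J nu = E(Ginf * mubar, nu / mubar), and I^infty gamma = E(Gunc * mu, gamma / mu)
   when gamma / mu is swap-symmetric.  The conductances Ginf * mubar are the
   swap-average of Gunc * mu, so the two forms agree on swap-symmetric densities.
   The constraint M nu = gamma says exactly that gamma / mu is the swap-average of
   nu / mubar: it forces gamma / mu to be symmetric (otherwise I_1 gamma = +oo),
   and since (a, b) |-> a - sqrt a * sqrt b is convex, averaging over the swap can
   only lower E.  The infimum is therefore attained at nu = mubar * gamma / mu. *)

Lemma sqrt_defect_midpoint_convex (R : rcfType) (a b a' b' : R) :
  0 <= a -> 0 <= b -> 0 <= a' -> 0 <= b' ->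
  2 * ((a + a') / 2 - Num.sqrt ((a + a') / 2) * Num.sqrt ((b + b') / 2))
  <= (a - Num.sqrt a * Num.sqrt b) + (a' - Num.sqrt a' * Num.sqrt b').
Proof.
move=> ha hb ha' hb'.
set u := Num.sqrt ((a + a') / 2); set v := Num.sqrt ((b + b') / 2).
have u2 : u ^+ 2 = (a + a') / 2 by rewrite sqr_sqrtr // divr_ge0 ?addr_ge0.
have v2 : v ^+ 2 = (b + b') / 2 by rewrite sqr_sqrtr // divr_ge0 ?addr_ge0.
have [u0 v0] : 0 <= u /\ 0 <= v by rewrite !sqrtr_ge0.
have ea := sqr_sqrtr ha; have eb := sqr_sqrtr hb.
have ea' := sqr_sqrtr ha'; have eb' := sqr_sqrtr hb'.
set p := Num.sqrt a in ea *; set q := Num.sqrt b in eb *.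
set p' := Num.sqrt a' in ea' *; set q' := Num.sqrt b' in eb' *.
suff : p * q + p' * q' <= 2 * (u * v) by lra.
(* Cauchy-Schwarz: (p q + p' q')^2 <= (p^2 + p'^2) (q^2 + q'^2) = 4 u^2 v^2 *)
apply: (le_trans (ler_norm _)).
rewrite -sqrtr_sqr -[2 * (u * v)]ger0_norm ?mulr_ge0 // -sqrtr_sqr.
rewrite ler_sqrt ?sqr_ge0 //.
have -> : (2 * (u * v)) ^+ 2 = 4 * u ^+ 2 * v ^+ 2 by ring.
rewrite u2 v2 -ea -eb -ea' -eb'.
have := sqr_ge0 (p * q' - p' * q); nra.
Qed.

Section DirichletForm.
Variables (R : realType) (X : finType).

Definition dirichlet_form (c : X -> X -> R) (t : X -> R) : R :=
  \sum_x \sum_(y | y != x) c x y * (t x - Num.sqrt (t x) * Num.sqrt (t y)).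

Lemma dirichlet_form_linear (a b : R) c1 c2 t :
  dirichlet_form (fun x y => a * c1 x y + b * c2 x y) t =
  a * dirichlet_form c1 t + b * dirichlet_form c2 t.
Proof.
rewrite /dirichlet_form !mulr_sumr -big_split; apply: eq_bigr => x _.
rewrite !mulr_sumr -big_split; apply: eq_bigr => y _ /=; ring.
Qed.

Variable sigma : X -> X.
Hypothesis sigma_inj : injective sigma.

Lemma dirichlet_form_comp c t :
  dirichlet_form (fun x y => c (sigma x) (sigma y)) (t \o sigma) =
  dirichlet_form c t.
Proof.
rewrite /dirichlet_form [RHS](reindex_inj sigma_inj); apply: eq_bigr => x _.
rewrite [RHS](reindex_inj sigma_inj); apply: eq_big => [y|y _] //.
by rewrite (inj_eq sigma_inj).
Qed.

Lemma dirichlet_form_avg_rates c t : (forall x, t (sigma x) = t x) ->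
  dirichlet_form (fun x y => (c x y + c (sigma x) (sigma y)) / 2) t =
  dirichlet_form c t.
Proof.
move=> /funext tK.
have -> : (fun x y => (c x y + c (sigma x) (sigma y)) / 2) =
          (fun x y => 2^-1 * c x y + 2^-1 * c (sigma x) (sigma y)).
  by apply: funext => x; apply: funext => y; ring.
rewrite dirichlet_form_linear.
have -> : dirichlet_form (fun x y => c (sigma x) (sigma y)) t = dirichlet_form c t.
  by rewrite -[in LHS]tK dirichlet_form_comp.
lra.
Qed.

Lemma dirichlet_form_symmetrize c t :
  (forall x y, c (sigma x) (sigma y) = c x y) ->
  (forall x y, 0 <= c x y) -> (forall x, 0 <= t x) ->
  dirichlet_form c (fun x => (t x + t (sigma x)) / 2) <= dirichlet_form c t.
Proof.
move=> cK c_ge0 t_ge0.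
have tE : dirichlet_form c t = dirichlet_form c (t \o sigma).
  rewrite -[LHS](dirichlet_form_comp c t); congr dirichlet_form.
  by apply: funext => x; apply: funext => y.
suff : 2 * dirichlet_form c (fun x => (t x + t (sigma x)) / 2)
       <= dirichlet_form c t + dirichlet_form c (t \o sigma).
  by rewrite -tE; lra.
rewrite /dirichlet_form -big_split mulr_sumr; apply: ler_sum => x _.
rewrite -big_split mulr_sumr; apply: ler_sum => y _ /=.
rewrite -mulrDr mulrCA; apply: ler_wpM2l; first exact: c_ge0.
exact: sqrt_defect_midpoint_convex.
Qed.

End DirichletForm.

Lemma swapK (S : finType) : involutive (@swap S).
Proof. by case. Qed.

Lemma swap_inj (S : finType) : injective (@swap S).
Proof. exact: can_inj (@swapK S). Qed.

Section InfiniteSwapping.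
Variables (R : realType) (S : finType) (G1 G2 : S -> S -> R) (mu1 mu2 : S -> R).
Hypotheses (G1_ge0 : forall x y, x != y -> 0 <= G1 x y)
           (G2_ge0 : forall x y, x != y -> 0 <= G2 x y)
           (mu1_gt0 : forall x, 0 < mu1 x) (mu2_gt0 : forall x, 0 < mu2 x).

Local Notation mu12 := (mu mu1 mu2).
Local Notation mubar12 := (mubar mu1 mu2).

Definition conductance_inf x y := Ginf G1 G2 mu1 mu2 x y * mubar12 x.
Definition conductance_unc x y := Gunc G1 G2 x y * mu12 x.

Lemma mu12_gt0 x : 0 < mu12 x.
Proof. by rewrite /mu mulr_gt0. Qed.

Lemma mu12_swap_add_gt0 x : 0 < mu12 x + mu12 (swap x).
Proof. by rewrite addr_gt0 ?mu12_gt0. Qed.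

Lemma mubar12_gt0 x : 0 < mubar12 x.
Proof. by rewrite divr_gt0 ?mu12_swap_add_gt0. Qed.

Lemma mubar12_swap x : mubar12 (swap x) = mubar12 x.
Proof. by rewrite /mubar swapK addrC. Qed.

Lemma conductance_inf_avg x y :
  conductance_inf x y =
  (conductance_unc x y + conductance_unc (swap x) (swap y)) / 2.
Proof.
case: x y => [x1 x2] [y1 y2].
have := mu12_swap_add_gt0 (x1, x2).
rewrite /conductance_inf /conductance_unc /Ginf /Gunc /rho /mubar /mu /= => mu_gt0.
case: (eqVneq x1 y1) => [<-|h1]; case: (eqVneq x2 y2) => [<-|h2];
  rewrite ?eqxx ?(negbTE h1) ?(negbTE h2) /=; try ring.
all: by field; rewrite gt_eqF // addrC.
Qed.

Lemma conductance_unc_ge0 x y : 0 <= conductance_unc x y.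
Proof.
case: x y => [x1 x2] [y1 y2]; rewrite /conductance_unc /Gunc /=.
have mu_ge0 := ltW (mu12_gt0 (x1, x2)).
case: ifP => [/andP [_ h]|_]; first by rewrite mulr_ge0 ?G1_ge0.
case: ifP => [/andP [_ h]|_]; first by rewrite mulr_ge0 ?G2_ge0.
by rewrite mul0r.
Qed.

Lemma conductance_inf_ge0 x y : 0 <= conductance_inf x y.
Proof. by rewrite conductance_inf_avg divr_ge0 ?addr_ge0 ?conductance_unc_ge0. Qed.

Lemma conductance_inf_swap x y :
  conductance_inf (swap x) (swap y) = conductance_inf x y.
Proof. by rewrite !conductance_inf_avg !swapK addrC. Qed.

Lemma Jfun_dirichlet nu :
  Jfun G1 G2 mu1 mu2 nu =
  dirichlet_form conductance_inf (fun x => nu x / mubar12 x).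
Proof.
rewrite /Jfun /dirichlet_form -sumrB; apply: eq_bigr => x _.
rewrite /qinf !mulr_suml -sumrB; apply: eq_bigr => y _.
rewrite /conductance_inf; ring.
Qed.

Lemma qunc_offdiag x : qunc G1 G2 x = \sum_(y | y != x) Gunc G1 G2 x y.
Proof.
have -> : \sum_(y | y != x) Gunc G1 G2 x y = \sum_y Gunc G1 G2 x y.
  by rewrite [RHS](bigD1 x) //= {2}/Gunc !eqxx /= add0r.
case: x => [x1 x2].
have -> : \sum_y Gunc G1 G2 (x1, x2) y = \sum_a \sum_b Gunc G1 G2 (x1, x2) (a, b).
  by rewrite pair_bigA; apply: eq_bigr => -[].
rewrite (bigD1 x1) //= /qunc /qrate addrC; congr (_ + _).
- apply: eq_bigr => a ha; rewrite (bigD1 x2) //= big1 ?addr0.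
    by rewrite /Gunc /= eqxx eq_sym ha.
  move=> b hb; rewrite /Gunc /= eq_sym (negbTE hb) /=.
  by rewrite eq_sym (negbTE ha).
- rewrite big_mkcond; apply: eq_bigr => b _.
  by rewrite /Gunc /= eqxx andbF /= eq_sym.
Qed.

Lemma Iinf_dirichlet gamma :
  (forall x, gamma (swap x) / mu12 (swap x) = gamma x / mu12 x) ->
  Iinf G1 G2 mu1 mu2 gamma =
  (dirichlet_form conductance_unc (fun x => gamma x / mu12 x))%:E.
Proof.
move=> gammaK; rewrite /Iinf ifT; last by apply/forallP => x; rewrite gammaK.
congr EFin; rewrite /dirichlet_form -sumrB; apply: eq_bigr => x _.
rewrite qunc_offdiag mulr_suml -sumrB; apply: eq_bigr => y _.
rewrite /conductance_unc mulrBr; congr (_ - _); last by ring.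
by field; rewrite gt_eqF ?mu12_gt0.
Qed.

Lemma Mmap_density nu gamma : (forall x, Mmap mu1 mu2 nu x = gamma x) ->
  forall x, gamma x / mu12 x =
    (nu x / mubar12 x + nu (swap x) / mubar12 (swap x)) / 2.
Proof.
move=> Mnu x; rewrite -Mnu /Mmap /rho mubar12_swap /mubar.
by field; rewrite !gt_eqF ?mu12_gt0 ?mu12_swap_add_gt0.
Qed.

Lemma Mmap_density_swap nu gamma : (forall x, Mmap mu1 mu2 nu x = gamma x) ->
  forall x, gamma (swap x) / mu12 (swap x) = gamma x / mu12 x.
Proof. by move=> Mnu x; rewrite !(Mmap_density Mnu) swapK addrC. Qed.

Definition Mmap_preimage (gamma : S * S -> R) x := gamma x / mu12 x * mubar12 x.

Section MmapPreimage.
Variable gamma : S * S -> R.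
Hypothesis gammaK : forall x, gamma (swap x) / mu12 (swap x) = gamma x / mu12 x.

Lemma Mmap_preimageE x :
  Mmap_preimage gamma x = (gamma x + gamma (swap x)) / 2.
Proof.
have mu_neq0 y := gt_eqF (mu12_gt0 y).
have -> : gamma (swap x) = gamma x / mu12 x * mu12 (swap x).
  by rewrite -gammaK divfK ?mu_neq0.
by rewrite /Mmap_preimage /mubar; field; rewrite mu_neq0.
Qed.

Lemma Mmap_preimage_prob : is_prob gamma -> is_prob (Mmap_preimage gamma).
Proof.
move=> [gamma_ge0 gamma1]; split.
  by move=> x; rewrite Mmap_preimageE divr_ge0 ?addr_ge0.
under eq_bigr do rewrite Mmap_preimageE.
rewrite -mulr_suml big_split /= [X in _ + X](reindex_inj (@swap_inj S)) /=.
under [X in _ + X]eq_bigr do rewrite swapK.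
by rewrite gamma1; lra.
Qed.

Lemma Mmap_preimageK x : Mmap mu1 mu2 (Mmap_preimage gamma) x = gamma x.
Proof.
rewrite /Mmap /rho /Mmap_preimage gammaK mubar12_swap /mubar.
by field; rewrite !gt_eqF ?mu12_gt0 ?mu12_swap_add_gt0.
Qed.

End MmapPreimage.

Lemma I1_eq_Iinf gamma : is_prob gamma ->
  I1 G1 G2 mu1 mu2 gamma = Iinf G1 G2 mu1 mu2 gamma.
Proof.
move=> gamma_prob.
case: (boolP [forall x, gamma x / mu12 x == gamma (swap x) / mu12 (swap x)])
  => [/forallP gammaK | gamma_asym]; last first.
  rewrite /Iinf (negbTE gamma_asym).
  apply/ereal_inf_pinfty => _ [nu [_ Mnu] <-]; exfalso.
  move/forallP: gamma_asym; apply => x.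
  by rewrite (Mmap_density_swap Mnu).
have {}gammaK x := esym (eqP (gammaK x)).
rewrite Iinf_dirichlet // -(dirichlet_form_avg_rates (@swap_inj S)); last exact: gammaK.
have -> : (fun x y => (conductance_unc x y + conductance_unc (swap x) (swap y)) / 2)
          = conductance_inf.
  by apply: funext => x; apply: funext => y; rewrite conductance_inf_avg.
apply: le_anti; apply/andP; split.
- apply: ereal_inf_lbound; exists (Mmap_preimage gamma).
    by split; [exact: Mmap_preimage_prob | exact: Mmap_preimageK].
  rewrite Jfun_dirichlet; congr (EFin (dirichlet_form _ _)).
  by apply: funext => x; rewrite mulfK // gt_eqF ?mubar12_gt0.
- apply/ereal_infP => _ [nu [[nu_ge0 _] {}Mnu] <-].
  rewrite lee_fin Jfun_dirichlet.
  have -> : (fun x => gamma x / mu12 x) =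
    (fun x => (nu x / mubar12 x + nu (swap x) / mubar12 (swap x)) / 2).
    by apply: funext => x; rewrite (Mmap_density Mnu).
  apply: dirichlet_form_symmetrize.
  + exact: swap_inj.
  + exact: conductance_inf_swap.
  + exact: conductance_inf_ge0.
  + by move=> x; rewrite divr_ge0 // ltW ?mubar12_gt0.
Qed.

End InfiniteSwapping.

Lemma reversible_invariant_gt0 (R : realType) (S : finType)
    (G : S -> S -> R) (m : S -> R) :
  irreducible G -> is_invariant G m -> reversible G m -> forall x, 0 < m x.
Proof.
move=> Girr [[m_ge0 m1] _] Grev.
have [x0 m_x0] : exists x0, 0 < m x0.
  case: (boolP [exists x0, 0 < m x0]) => [/existsP //|/existsPn m_le0].
  suff : \sum_x m x = 0 by rewrite m1 => /eqP; rewrite oner_eq0.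
  apply: big1 => x _; apply/eqP; rewrite eq_le m_ge0 andbT.
  by rewrite leNgt m_le0.
move=> y; have /connectP [p p_path ->] := Girr x0 y.
elim: p x0 m_x0 p_path => [|z p IHp] x m_x //= /andP [/andP [_ Gxz] p_path].
apply: IHp p_path; rewrite lt0r m_ge0 andbT; apply/eqP => m_z0.
(* detailed balance: m x * G x z > 0 forces m z > 0 *)
have /eqP := Grev x z; rewrite m_z0 mul0r mulf_eq0.
by rewrite (gt_eqF m_x) (gt_eqF Gxz).
Qed.

Theorem corollary3p3 (R : realType) (S : finType)
  (G1 G2 : S -> S -> R) (mu1 mu2 : S -> R)
  (hG1 : is_intensity G1) (hG2 : is_intensity G2)
  (hirr1 : irreducible G1) (hirr2 : irreducible G2)
  (hinv1 : is_invariant G1 mu1) (hinv2 : is_invariant G2 mu2)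
  (hrev1 : reversible G1 mu1) (hrev2 : reversible G2 mu2)
  (gamma : S * S -> R) (hgamma : is_prob gamma) :
  I1 G1 G2 mu1 mu2 gamma = Iinf G1 G2 mu1 mu2 gamma.
Proof.
apply: I1_eq_Iinf hgamma.
- exact: hG1.1.
- exact: hG2.1.
- exact: reversible_invariant_gt0 hirr1 hinv1 hrev1.
- exact: reversible_invariant_gt0 hirr2 hinv2 hrev2.
Qed.
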